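(* Consider the single-element, single-slab periodic space-time SBP scheme $$\mathsf D_t\boldsymbol\rho+\tilde{\mathsf D}_x\langle v\boldsymbol g\rangle=-\sigma_a\boldsymbol\rho-\mathsf H_t^{-1}\mathsf t_B\mathsf t_B^\top(\boldsymbol\rho-\boldsymbol\rho(0)),$$ $$\mathsf D_t\boldsymbol g_k+\tfrac{v_k}{\varepsilon}\tilde{\mathsf D}_x\boldsymbol g_k-\tfrac1\varepsilon\langle v\tilde{\mathsf D}_x\boldsymbol g\rangle+\tfrac{v_k}{\varepsilon^2}\tilde{\mathsf D}_x\boldsymbol\rho=-\Big(\tfrac{\sigma_s}{\varepsilon^2}+\sigma_a\Big)\boldsymbol g_k-\mathsf H_t^{-1}\mathsf t_B\mathsf t_B^\top(\boldsymbol g_k-\boldsymbol g_k(0)),\quad k=1,\dots,n_v.$$ This scheme is asymptotic preserving: for fixed discretization, in the formal limit $\varepsilon\to0$ (assuming the discrete derivative approximations remain bounded) it reduces to $$\mathsf D_t\boldsymbol\rho=\tilde{\mathsf D}_x\Big(\tfrac{\langle v^2\rangle}{\sigma_s}\tilde{\mathsf D}_x\boldsymbol\rho\Big)-\sigma_a\boldsymbol\rho-\mathsf H_t^{-1}\mathsf t_B\mathsf t_B^\top(\boldsymbol\rho-\boldsymbol\rho(0)),$$ which is a consistent and stable discretization of the limit equation $\partial_t\rho=\langle v^2\rangle\partial_x\big(\tfrac1{\sigma_s}\partial_x\rho\big)-\sigma_a\rho$.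
   Context: SBP operators: $\bar{\mathsf D}=\bar{\mathsf H}^{-1}\bar{\mathsf Q}$ on nodes $x_0<\dots<x_n$ is a degree-$p$ SBP approximation of $d/dx$ if it differentiates monomials of degree $\le p$ exactly, $\bar{\mathsf H}$ is diagonal symmetric positive definite, and $\bar{\mathsf Q}+\bar{\mathsf Q}^\top=\mathrm{diag}(-1,0,\dots,0,1)=\bar{\boldsymbol t}_R\bar{\boldsymbol t}_R^\top-\bar{\boldsymbol t}_L\bar{\boldsymbol t}_L^\top$ with $\bar{\boldsymbol t}_L,\bar{\boldsymbol t}_R$ the first/last unit vectors. Spatial SBP operator $\bar{\mathsf D}_x=\bar{\mathsf H}_x^{-1}\bar{\mathsf Q}_x$ ($n_x+1$ nodes), temporal $\bar{\mathsf D}_t=\bar{\mathsf H}_t^{-1}\bar{\mathsf Q}_t$ ($n_t+1$ nodes) with first/last unit vectors $\bar{\boldsymbol t}_B,\bar{\boldsymbol t}_T$. $\mathsf D_t=\bar{\mathsf D}_t\otimes\mathsf I_{n_x}$, $\mathsf D_x=\mathsf I_{n_t}\otimes\bar{\mathsf D}_x$, $\mathsf H_t=\bar{\mathsf H}_t\otimes\mathsf I_{n_x}$, $\mathsf H_x=\mathsf I_{n_t}\otimes\bar{\mathsf H}_x$, $\mathsf t_{R/L}=\mathsf I_{n_t}\otimes\bar{\boldsymbol t}_{R/L}$, $\mathsf t_B=\bar{\boldsymbol t}_B\otimes\mathsf I_{n_x}$, where $\mathsf I_{n_x},\mathsf I_{n_t}$ are identities of sizes $n_x+1,n_t+1$.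 $\tilde{\mathsf D}_x=\mathsf D_x-\frac12\mathsf H_x^{-1}\big(\mathsf t_R(\mathsf t_R^\top-\mathsf t_L^\top)-\mathsf t_L(\mathsf t_L^\top-\mathsf t_R^\top)\big)$. Velocity nodes $v_k$, weights $\omega_k$ with $\sum\omega_k=1$, $\sum\omega_kv_k=0$; $\langle\boldsymbol a\rangle=\sum_k\omega_k\boldsymbol a_k$, $\langle v^2\rangle=\sum_k\omega_kv_k^2$. $\varepsilon>0$, $\sigma_s>0$, $\sigma_a\ge0$. A scheme is called asymptotic preserving if, for fixed discretization parameters, in the limit $\varepsilon\to0$ it becomes a consistent (and stable) discretization of the macroscopic limit equation. Stability of the limit scheme means the discrete energy $\frac12\boldsymbol\rho^\top(\bar{\boldsymbol t}_T\bar{\boldsymbol t}_T^\top\otimes\bar{\mathsf H}_x)\boldsymbol\rho$ at the final time is bounded by initial-data terms. *)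

From HB Require Import structures.
From mathcomp Require Import all_boot all_order all_algebra.
From mathcomp Require Import all_classical all_reals all_analysis.
Set Implicit Arguments. Unset Strict Implicit. Unset Printing Implicit Defensive.
Import Order.TTheory GRing.Theory Num.Theory.
Local Open Scope ring_scope.

(* Grid functions on the space-time mesh
   {t_0<..<t_nt} x {x_0<..<x_nx} are stored as matrices
   X : 'M[R]_(nt.+1, nx.+1), X i j = value at (t_i, x_j).
   The Kronecker operators A (x) B act as  X |-> A *m X *m B^T, so
   D_t = Dbar_t (x) I  is  X |-> Dbar_t *m X,
   D_x = I (x) Dbar_x  is  X |-> X *m Dbar_x^T, etc. *)

Definition e_first (R : nzRingType) (n : nat) : 'cV[R]_n.+1 :=
  \col_i (i == ord0)%:R.
Definition e_last (R : nzRingType) (n : nat) : 'cV[R]_n.+1 :=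
  \col_i (i == ord_max)%:R.

Definition increasing (R : realType) (n : nat) (x : 'I_n.+1 -> R) : Prop :=
  forall i j : 'I_n.+1, (i < j)%N -> x i < x j.

Definition Dop (R : realType) (n : nat) (H Q : 'M[R]_n.+1) : 'M[R]_n.+1 :=
  invmx H *m Q.

Definition is_SBP (R : realType) (n p : nat) (x : 'I_n.+1 -> R)
    (H Q : 'M[R]_n.+1) : Prop :=
  [/\ increasing x,
      (forall i j, i != j -> H i j = 0),
      (forall i, 0 < H i i),
      Q + Q^T = e_last R n *m (e_last R n)^T - e_first R n *m (e_first R n)^T
    & forall m : nat, (m <= p)%N ->
        Dop H Q *m (\col_i (x i ^+ m)) = \col_i (m%:R * x i ^+ m.-1)].

Definition Dtil_bar (R : realType) (n : nat) (H Q : 'M[R]_n.+1) : 'M[R]_n.+1 :=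
  Dop H Q - (1/2) *: (invmx H *m
     (e_last R n *m (e_last R n - e_first R n)^T
      - e_first R n *m (e_first R n - e_last R n)^T)).

Definition DT (R : realType) (nt nx : nat) (Ht Qt : 'M[R]_nt.+1)
    (X : 'M[R]_(nt.+1, nx.+1)) : 'M[R]_(nt.+1, nx.+1) := Dop Ht Qt *m X.

Definition DXt (R : realType) (nt nx : nat) (Hx Qx : 'M[R]_nx.+1)
    (X : 'M[R]_(nt.+1, nx.+1)) : 'M[R]_(nt.+1, nx.+1) := X *m (Dtil_bar Hx Qx)^T.

(* SAT term  H_t^{-1} t_B t_B^T (X - X(0)),  where X(0) = t_B f carries the
   initial datum f : 'rV_(nx.+1) on the bottom time slice. *)
Definition SAT (R : realType) (nt nx : nat) (Ht : 'M[R]_nt.+1)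
    (X : 'M[R]_(nt.+1, nx.+1)) (f : 'rV[R]_nx.+1) : 'M[R]_(nt.+1, nx.+1) :=
  invmx Ht *m (e_first R nt *m ((e_first R nt)^T *m X - f)).

Definition avg_v2 (R : realType) (nv : nat) (v w : 'I_nv -> R) : R :=
  \sum_k w k * v k ^+ 2.

Definition kinetic_scheme (R : realType) (nt nx nv : nat)
    (Ht Qt : 'M[R]_nt.+1) (Hx Qx : 'M[R]_nx.+1) (v w : 'I_nv -> R)
    (sigs siga eps : R) (f : 'rV[R]_nx.+1) (h : 'I_nv -> 'rV[R]_nx.+1)
    (rho : 'M[R]_(nt.+1, nx.+1)) (g : 'I_nv -> 'M[R]_(nt.+1, nx.+1)) : Prop :=
  DT Ht Qt rho + DXt Hx Qx (\sum_k (w k * v k) *: g k)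
    = - (siga *: rho) - SAT Ht rho f
  /\ forall k,
    DT Ht Qt (g k) + (v k / eps) *: DXt Hx Qx (g k)
      - eps^-1 *: (\sum_l (w l * v l) *: DXt Hx Qx (g l))
      + (v k / eps ^+ 2) *: DXt Hx Qx rho
    = - ((sigs / eps ^+ 2 + siga) *: g k) - SAT Ht (g k) (h k).

Definition limit_scheme (R : realType) (nt nx nv : nat)
    (Ht Qt : 'M[R]_nt.+1) (Hx Qx : 'M[R]_nx.+1) (v w : 'I_nv -> R)
    (sigs siga : R) (f : 'rV[R]_nx.+1) (rho : 'M[R]_(nt.+1, nx.+1)) : Prop :=
  DT Ht Qt rho
    = DXt Hx Qx ((avg_v2 v w / sigs) *: DXt Hx Qx rho)
      - siga *: rho - SAT Ht rho f.

Definition final_energy (R : realType) (nt nx : nat) (Hx : 'M[R]_nx.+1)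
    (rho : 'M[R]_(nt.+1, nx.+1)) : R :=
  (1/2) * ((e_last R nt)^T *m rho *m Hx *m rho^T *m e_last R nt) ord0 ord0.

Definition data_energy (R : realType) (nx : nat) (Hx : 'M[R]_nx.+1)
    (f : 'rV[R]_nx.+1) : R := (1/2) * (f *m Hx *m f^T) ord0 ord0.

Definition grid (R : realType) (nt nx : nat) (tn : 'I_nt.+1 -> R)
    (xn : 'I_nx.+1 -> R) (u : R -> R -> R) : 'M[R]_(nt.+1, nx.+1) :=
  \matrix_(i, j) u (tn i) (xn j).

Definition poly2 (R : realType) (pt px : nat) (c : 'I_pt.+1 -> 'I_px.+1 -> R)
    (t x : R) : R :=
  \sum_(m < pt.+1) \sum_(l < px.+1) c m l * t ^+ m * x ^+ l.
Definition poly2_dt (R : realType) (pt px : nat) (c : 'I_pt.+1 -> 'I_px.+1 -> R)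
    (t x : R) : R :=
  \sum_(m < pt.+1) \sum_(l < px.+1) c m l * (m%:R * t ^+ m.-1) * x ^+ l.
Definition poly2_dx (R : realType) (pt px : nat) (c : 'I_pt.+1 -> 'I_px.+1 -> R)
    (t x : R) : R :=
  \sum_(m < pt.+1) \sum_(l < px.+1) c m l * t ^+ m * (l%:R * x ^+ l.-1).
Definition poly2_dxx (R : realType) (pt px : nat) (c : 'I_pt.+1 -> 'I_px.+1 -> R)
    (t x : R) : R :=
  \sum_(m < pt.+1) \sum_(l < px.+1)
     c m l * t ^+ m * (l%:R * (l.-1)%:R * x ^+ l.-2).

(* (1) Multiplying the kinetic equation for g_k by eps^2 and letting eps -> 0
   leaves sigma_s g_k = - v_k Dx rho; averaging against v_k turns the flux
   <v g> of the rho equation into -(<v^2>/sigma_s) Dx rho, which is the limit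
   scheme.
   (2) The grid restriction of u(t,x) = sum c_ml t^m x^l factors as V_t C V_x^T
   with Vandermonde matrices V; an SBP operator of degree p maps V to the
   matrix of exact derivatives, and periodicity of u and d_x u makes the
   correction term of the periodic operator vanish.
   (3) Multiplying the limit scheme by H_t on the left and by H_x rho^T on the
   right and taking traces, the SBP property of Q_t turns the time derivative
   into half the difference of final and initial energies, the H_x-skewness of
   the periodic operator makes the diffusion term dissipative, and the SAT
   term is controlled by completing the square against the initial datum. *)
From HB Require Import structures.
From mathcomp Require Import all_boot all_order all_algebra.
From mathcomp Require Import all_classical all_reals all_analysis.
From mathcomp Require Import ring lra.
Import Order.TTheory GRing.Theory Num.Theory numFieldNormedType.Exports.
Local Open Scope classical_set_scope.
Local Open Scope ring_scope.

Lemma e_firstE (R : nzRingType) n : e_first R n = delta_mx ord0 0.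
Proof. by apply/matrixP => i j; rewrite !mxE (ord1 j) andbT. Qed.

Lemma e_lastE (R : nzRingType) n : e_last R n = delta_mx ord_max 0.
Proof. by apply/matrixP => i j; rewrite !mxE (ord1 j) andbT. Qed.

Lemma SAT_row0 (R : realType) nt nx (Ht : 'M[R]_nt.+1) (X : 'M[R]_(nt.+1, nx.+1)) :
  SAT Ht X (row ord0 X) = 0.
Proof. by rewrite /SAT e_firstE trmx_delta -rowE subrr !mulmx0. Qed.

Lemma DXtZ (R : realType) nt nx (Hx Qx : 'M[R]_nx.+1) (a : R)
    (X : 'M[R]_(nt.+1, nx.+1)) :
  DXt Hx Qx (a *: X) = a *: DXt Hx Qx X.
Proof. by rewrite /DXt scalemxAl. Qed.

Section SBPNorms.
Context {R : realType}.

Lemma sbp_normE {n p : nat} {x : 'I_n.+1 -> R} {H Q : 'M[R]_n.+1} :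
  is_SBP p x H Q -> H = diag_mx (\row_i H i i).
Proof.
case=> _ H_diag _ _ _; apply/matrixP => i j; rewrite !mxE.
by case: eqVneq => [->|/H_diag]; rewrite ?mulr1n ?mulr0n.
Qed.

Lemma sbp_norm_sym {n p : nat} {x : 'I_n.+1 -> R} {H Q : 'M[R]_n.+1} :
  is_SBP p x H Q -> H^T = H.
Proof. by move=> /sbp_normE ->; rewrite tr_diag_mx. Qed.

Lemma sbp_norm_unit {n p : nat} {x : 'I_n.+1 -> R} {H Q : 'M[R]_n.+1} :
  is_SBP p x H Q -> H \in unitmx.
Proof.
move=> sbp; have [_ _ H_pos _ _] := sbp.
rewrite (sbp_normE sbp) unitmxE det_diag unitfE gt_eqF //.
by apply: prodr_gt0 => i _; rewrite mxE.
Qed.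

Lemma mxtrace_diag_form_ge0 n m (d : 'rV[R]_n) (d' : 'rV[R]_m) (Y : 'M[R]_(n, m)) :
  (forall i, 0 <= d 0 i) -> (forall j, 0 <= d' 0 j) ->
  0 <= \tr (diag_mx d *m Y *m diag_mx d' *m Y^T).
Proof.
move=> d_ge0 d'_ge0; rewrite mul_diag_mx mul_mx_diag /mxtrace.
apply: sumr_ge0 => i _; rewrite mxE; apply: sumr_ge0 => j _; rewrite !mxE.
have -> : d 0 i * Y i j * d' 0 j * Y i j = d 0 i * d' 0 j * Y i j ^+ 2 by ring.
by apply: mulr_ge0; [exact: mulr_ge0 | exact: sqr_ge0].
Qed.

Lemma mxtrace_sbp_boundary {n : nat} {Q M : 'M[R]_n.+1} :
  Q + Q^T = e_last R n *m (e_last R n)^T - e_first R n *m (e_first R n)^T ->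
  M^T = M ->
  \tr (Q *m M) *+ 2 = \tr ((e_last R n)^T *m M *m e_last R n)
                     - \tr ((e_first R n)^T *m M *m e_first R n).
Proof.
move=> Q_boundary M_sym.
have trQT : \tr (Q^T *m M) = \tr (Q *m M).
  by rewrite -mxtrace_tr trmx_mul trmxK M_sym mxtrace_mulC.
rewrite mulr2n -{2}trQT -mxtraceD -mulmxDl Q_boundary mulmxBl raddfB /= -!mulmxA.
by rewrite mxtrace_mulC [in X in _ - X]mxtrace_mulC !mulmxA.
Qed.

End SBPNorms.

Section PeriodicSBP.
Context {R : realType} {n : nat} {H Q : 'M[R]_n.+1}.
Local Notation tL := (e_first R n).
Local Notation tR := (e_last R n).

Lemma periodic_correctionE :
  tR *m (tR - tL)^T - tL *m (tL - tR)^T = (tR + tL) *m (tR - tL)^T.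
Proof. by rewrite -[tL - tR]opprB raddfN mulmxN opprK mulmxDl. Qed.

Lemma mulmx_Dtil_bar_periodic m (X : 'M[R]_(m, n.+1)) :
  (forall i, X i ord0 = X i ord_max) ->
  X *m (Dtil_bar H Q)^T = X *m (Dop H Q)^T.
Proof.
move=> X_periodic; have X_jump : X *m (tR - tL) = 0.
  by apply/matrixP => i j; rewrite mulmxBr e_firstE e_lastE -!colE !mxE X_periodic subrr.
rewrite /Dtil_bar periodic_correctionE linearB /= mulmxBr linearZ /= -scalemxAr.
by rewrite !trmx_mul trmxK !mulmxA X_jump !mul0mx scaler0 subr0.
Qed.

Lemma Dtil_bar_skew {p : nat} {x : 'I_n.+1 -> R} :
  is_SBP p x H Q -> (Dtil_bar H Q)^T *m H = - (H *m Dtil_bar H Q).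
Proof.
move=> sbp; have [_ _ _ Q_boundary _] := sbp.
rewrite -{2}(sbp_norm_sym sbp) -trmx_mul.
rewrite /Dtil_bar /Dop mulmxBr -scalemxAr !mulKVmx ?(sbp_norm_unit sbp) //.
rewrite periodic_correctionE; apply/matrixP => i j.
have := congr1 (fun M : 'M[R]_n.+1 => M i j) Q_boundary.
by rewrite !mxE !big_ord1 !mxE => ?; lra.
Qed.

End PeriodicSBP.

Section MatrixLimits.
Context {R : realType} {T : Type} {F : set_system T} {FF : Filter F}.

Lemma cvg_mxP m n (X : T -> 'M[R]_(m, n)) (L : 'M[R]_(m, n)) :
  X x @[x --> F] --> L <-> forall i j, X x i j @[x --> F] --> L i j.
Proof.
split=> [XL i j|XL].
  exact: (continuous_cvg _ (@coord_continuous R m n i j L) XL).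
apply/cvg_mx_entourageP => A entA.
apply: filter_forall => i; apply: filter_forall => j; rewrite /nbhs /=.
apply: (@filterS _ _ FF (fun t => A (L i j, X t i j))) => [t|]; first by rewrite /= inE.
exact: (@cvg_entourage _ _ (fmap_filter _ FF) _ (XL i j) _ entA).
Qed.

Lemma cvg_sumr {I : Type} {r : seq I} {P : pred I} {V : normedModType R}
    {X : I -> T -> V} {L : I -> V} :
  (forall i, P i -> X i x @[x --> F] --> L i) ->
  \sum_(i <- r | P i) X i x @[x --> F] --> \sum_(i <- r | P i) L i.
Proof. by move=> XL; apply: cvg_big => //; exact: add_continuous. Qed.

Lemma cvgZ0 {V : normedModType R} {s : T -> R} {X : T -> V} {L : V} :
  s x @[x --> F] --> 0 -> X x @[x --> F] --> L -> s x *: X x @[x --> F] --> 0.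
Proof. by move=> s0 XL; rewrite -(scale0r L); exact: cvgZ. Qed.

Lemma cvg_mulmxl m n p (A : 'M[R]_(m, n)) (X : T -> 'M[R]_(n, p)) (L : 'M[R]_(n, p)) :
  X x @[x --> F] --> L -> A *m X x @[x --> F] --> A *m L.
Proof.
move/cvg_mxP=> XL; apply/cvg_mxP => i j.
under eq_cvg do rewrite mxE; rewrite mxE.
by apply: cvg_sumr => k _; apply: cvgM => //; exact: cvg_cst.
Qed.

Lemma cvg_mulmxr m n p (A : 'M[R]_(n, p)) (X : T -> 'M[R]_(m, n)) (L : 'M[R]_(m, n)) :
  X x @[x --> F] --> L -> X x *m A @[x --> F] --> L *m A.
Proof.
move/cvg_mxP=> XL; apply/cvg_mxP => i j.
under eq_cvg do rewrite mxE; rewrite mxE.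
by apply: cvg_sumr => k _; apply: cvgM => //; exact: cvg_cst.
Qed.

End MatrixLimits.

Lemma eq_cvg_at_right {R : realType} {V : normedModType R} {X Y : R -> V} {a b : V} :
  (forall e, 0 < e -> X e = Y e) ->
  X e @[e --> 0^'+] --> a -> Y e @[e --> 0^'+] --> b -> a = b.
Proof.
move=> XY Xa Yb; have Xb : X e @[e --> 0^'+] --> b.
  apply: cvg_trans Yb; apply: near_eq_cvg.
  by near=> e; rewrite XY //; near: e; exact: nbhs_right_gt.
exact: cvg_unique Xa Xb.
Unshelve. all: by end_near.
Qed.

Section SmallParameterLimit.
Context {R : realType} {nt nx nv : nat}.
Context {Ht Qt : 'M[R]_nt.+1} {Hx Qx : 'M[R]_nx.+1} {v w : 'I_nv -> R}.
Context {sigs siga : R} {f : 'rV[R]_nx.+1} {h : 'I_nv -> 'rV[R]_nx.+1}.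
Context {rho : R -> 'M[R]_(nt.+1, nx.+1)} {g : R -> 'I_nv -> 'M[R]_(nt.+1, nx.+1)}.
Context {rhoL : 'M[R]_(nt.+1, nx.+1)} {gL : 'I_nv -> 'M[R]_(nt.+1, nx.+1)}.
Hypothesis sigs_gt0 : 0 < sigs.
Hypothesis scheme : forall eps, 0 < eps ->
  kinetic_scheme Ht Qt Hx Qx v w sigs siga eps f h (rho eps) (g eps).
Hypothesis rho_cvg : rho e @[e --> 0^'+] --> rhoL.
Hypothesis g_cvg : forall k, g e k @[e --> 0^'+] --> gL k.

Let cvg_DT {X : R -> 'M[R]_(nt.+1, nx.+1)} {L} : X e @[e --> 0^'+] --> L ->
  DT Ht Qt (X e) @[e --> 0^'+] --> DT Ht Qt L.
Proof. exact: cvg_mulmxl. Qed.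

Let cvg_DXt {X : R -> 'M[R]_(nt.+1, nx.+1)} {L} : X e @[e --> 0^'+] --> L ->
  DXt Hx Qx (X e) @[e --> 0^'+] --> DXt Hx Qx L.
Proof. exact: cvg_mulmxr. Qed.

Let cvg_SAT a {X : R -> 'M[R]_(nt.+1, nx.+1)} {L} : X e @[e --> 0^'+] --> L ->
  SAT Ht (X e) a @[e --> 0^'+] --> SAT Ht L a.
Proof.
by move=> XL; do 2 apply: cvg_mulmxl; apply: cvgB (cvg_cst _); exact: cvg_mulmxl.
Qed.

Let cvg_id0 : e @[e --> (0 : R)^'+] --> 0.
Proof. exact: cvg_at_right_filter cvg_id. Qed.

Lemma kinetic_flux_limit k : gL k = - (v k / sigs) *: DXt Hx Qx rhoL.
Proof.
have scaled e : 0 < e ->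
    v k *: DXt Hx Qx (rho e) + e *: (e *: DT Ht Qt (g e k) + v k *: DXt Hx Qx (g e k)
                                    - \sum_l (w l * v l) *: DXt Hx Qx (g e l))
  = - (sigs *: g e k) - e *: (e *: (siga *: g e k + SAT Ht (g e k) (h k))).
  move=> e_gt0; have [_ /(_ k)/(congr1 (fun M => e ^+ 2 *: M))] := scheme _ e_gt0.
  rewrite !scalerDr !scalerN !scalerA; have e_neq0 : e != 0 by rewrite gt_eqF.
  have -> : e ^+ 2 * (v k / e) = e * v k by field.
  have -> : e ^+ 2 * e^-1 = e by field.
  have -> : e ^+ 2 * (v k / e ^+ 2) = v k by field.
  have -> : e ^+ 2 * (sigs / e ^+ 2 + siga) = sigs + e ^+ 2 * siga by field.
  by rewrite scalerDl -expr2 => scaled_eq; rewrite addrC scaled_eq !opprD addrA.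
(* The vanishing O(eps) terms are kept so that the limit lemmas apply verbatim. *)
have flux : v k *: DXt Hx Qx rhoL + 0 = - (sigs *: gL k) - 0.
  apply: (eq_cvg_at_right scaled).
    apply: cvgD (cvgZ (cvg_cst _) (cvg_DXt rho_cvg)) (cvgZ0 cvg_id0 _).
    apply: cvgB _ (cvg_sumr (fun l _ => cvgZ (cvg_cst _) (cvg_DXt (g_cvg l)))).
    exact: cvgD (cvgZ cvg_id0 (cvg_DT (g_cvg k))) (cvgZ (cvg_cst _) (cvg_DXt (g_cvg k))).
  apply: cvgB (cvgN (cvgZ (cvg_cst _) (g_cvg k))) (cvgZ0 cvg_id0 (cvgZ0 cvg_id0 _)).
  exact: cvgD (cvgZ (cvg_cst _) (g_cvg k)) (cvg_SAT _ (g_cvg k)).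
move: flux; rewrite addr0 subr0 => flux.
rewrite mulrC -mulNr -scalerA flux scalerN scaleNr opprK scalerA.
by rewrite mulVf ?scale1r // gt_eqF.
Qed.

Lemma weighted_flux_limit :
  \sum_k (w k * v k) *: gL k = - (avg_v2 v w / sigs) *: DXt Hx Qx rhoL.
Proof.
under eq_bigr do rewrite kinetic_flux_limit scalerA.
rewrite -scaler_suml /avg_v2 mulr_suml -sumrN; congr (_ *: _).
by apply: eq_bigr => k _; field; rewrite gt_eqF.
Qed.

Lemma kinetic_scheme_limit : limit_scheme Ht Qt Hx Qx v w sigs siga f rhoL.
Proof.
have lim : DT Ht Qt rhoL + DXt Hx Qx (\sum_k (w k * v k) *: gL k)
         = - (siga *: rhoL) - SAT Ht rhoL f.
  apply: (eq_cvg_at_right (fun e e_gt0 => proj1 (scheme e e_gt0))).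
    apply: cvgD (cvg_DT rho_cvg) (cvg_DXt _).
    exact: cvg_sumr (fun k _ => cvgZ (cvg_cst _) (g_cvg k)).
  exact: cvgB (cvgN (cvgZ (cvg_cst _) rho_cvg)) (cvg_SAT f rho_cvg).
move: lim; rewrite weighted_flux_limit DXtZ /limit_scheme DXtZ => lim.
by rewrite (canRL (addrK _) lim) scaleNr opprK addrC addrA.
Qed.

End SmallParameterLimit.

Definition powmx {R : nzRingType} {n q : nat} (a : 'I_q -> R) (d : 'I_q -> nat)
    (x : 'I_n -> R) : 'M[R]_(n, q) :=
  \matrix_(i, m) (a m * x i ^+ d m).

Lemma sbp_mul_powmx {R : realType} {n p : nat} {x : 'I_n.+1 -> R} {H Q : 'M[R]_n.+1}
    {q : nat} {a : 'I_q -> R} {d : 'I_q -> nat} :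
  is_SBP p x H Q -> (forall m, (d m <= p)%N) ->
  Dop H Q *m powmx a d x = powmx (fun m => a m * (d m)%:R) (fun m => (d m).-1) x.
Proof.
case=> _ _ _ _ exact_mono d_le; apply/matrixP => i m.
have := congr1 (fun M : 'cV[R]_n.+1 => M i 0) (exact_mono _ (d_le m)).
rewrite !mxE -mulrA => <-; rewrite mulr_sumr; apply: eq_bigr => k _; rewrite !mxE.
ring.
Qed.

Lemma grid_powmx (R : realType) nt nx (tn : 'I_nt.+1 -> R) (xn : 'I_nx.+1 -> R)
    qt qx (c : 'I_qt -> 'I_qx -> R) (a : 'I_qt -> R) (d : 'I_qt -> nat)
    (b : 'I_qx -> R) (e : 'I_qx -> nat) (u : R -> R -> R) :
  (forall t x, u t x = \sum_m \sum_l c m l * (a m * t ^+ d m) * (b l * x ^+ e l)) ->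
  grid tn xn u = powmx a d tn *m \matrix_(m, l) c m l *m (powmx b e xn)^T.
Proof.
move=> uE; apply/matrixP => i j; rewrite !mxE uE exchange_big.
apply: eq_bigr => l _; rewrite !mxE mulr_suml; apply: eq_bigr => m _; rewrite !mxE.
ring.
Qed.

Section Consistency.
Context {R : realType} {nt nx pt px : nat}.
Context {tn : 'I_nt.+1 -> R} {xn : 'I_nx.+1 -> R}.
Context {Ht Qt : 'M[R]_nt.+1} {Hx Qx : 'M[R]_nx.+1}.
Hypotheses (sbp_t : is_SBP pt tn Ht Qt) (sbp_x : is_SBP px xn Hx Qx).
Context {c : 'I_pt.+1 -> 'I_px.+1 -> R}.
Hypothesis u_periodic : forall t, poly2 c t (xn ord0) = poly2 c t (xn ord_max).
Hypothesis ux_periodic : forall t, poly2_dx c t (xn ord0) = poly2_dx c t (xn ord_max).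

Let C := \matrix_(m, l) c m l.
Local Notation V y := (powmx (fun=> 1) (@nat_of_ord _) y).

Lemma grid_poly2 : grid tn xn (poly2 c) = V tn *m C *m (V xn)^T.
Proof.
by apply: grid_powmx => t x; apply: eq_bigr => m _; apply: eq_bigr => l _; ring.
Qed.

Lemma grid_poly2_dt :
  grid tn xn (poly2_dt c) = Dop Ht Qt *m V tn *m C *m (V xn)^T.
Proof.
rewrite (sbp_mul_powmx sbp_t (@leq_ord _)).
by apply: grid_powmx => t x; apply: eq_bigr => m _; apply: eq_bigr => l _; ring.
Qed.

Lemma grid_poly2_dx :
  grid tn xn (poly2_dx c) = V tn *m C *m (Dop Hx Qx *m V xn)^T.
Proof.
rewrite (sbp_mul_powmx sbp_x (@leq_ord _)).
by apply: grid_powmx => t x; apply: eq_bigr => m _; apply: eq_bigr => l _; ring.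
Qed.

Lemma grid_poly2_dxx :
  grid tn xn (poly2_dxx c) = V tn *m C *m (Dop Hx Qx *m (Dop Hx Qx *m V xn))^T.
Proof.
rewrite (sbp_mul_powmx sbp_x (@leq_ord _)).
rewrite (sbp_mul_powmx sbp_x (fun m => leq_trans (leq_pred _) (leq_ord m))).
by apply: grid_powmx => t x; apply: eq_bigr => m _; apply: eq_bigr => l _; ring.
Qed.

Lemma DT_grid_poly2 : DT Ht Qt (grid tn xn (poly2 c)) = grid tn xn (poly2_dt c).
Proof. by rewrite /DT grid_poly2 grid_poly2_dt !mulmxA. Qed.

Lemma DXt_grid_poly2 : DXt Hx Qx (grid tn xn (poly2 c)) = grid tn xn (poly2_dx c).
Proof.
rewrite /DXt mulmx_Dtil_bar_periodic => [|i]; last by rewrite !mxE u_periodic.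
by rewrite grid_poly2 grid_poly2_dx (trmx_mul (Dop Hx Qx)) !mulmxA.
Qed.

Lemma DXt_grid_poly2_dx : DXt Hx Qx (grid tn xn (poly2_dx c)) = grid tn xn (poly2_dxx c).
Proof.
rewrite /DXt mulmx_Dtil_bar_periodic => [|i]; last by rewrite !mxE ux_periodic.
by rewrite grid_poly2_dx grid_poly2_dxx !(trmx_mul (Dop Hx Qx)) !mulmxA.
Qed.

Lemma limit_scheme_exact_poly2 (a sigs siga : R) :
  DT Ht Qt (grid tn xn (poly2 c))
    - DXt Hx Qx ((a / sigs) *: DXt Hx Qx (grid tn xn (poly2 c)))
    + siga *: grid tn xn (poly2 c)
    + SAT Ht (grid tn xn (poly2 c)) (\row_j poly2 c (tn ord0) (xn j))
  = grid tn xn (fun t x => poly2_dt c t x - a * (sigs^-1 * poly2_dxx c t x)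
                           + siga * poly2 c t x).
Proof.
have -> : \row_j poly2 c (tn ord0) (xn j) = row ord0 (grid tn xn (poly2 c)).
  by apply/matrixP => i j; rewrite !mxE.
rewrite SAT_row0 addr0 DT_grid_poly2 DXtZ DXt_grid_poly2 DXt_grid_poly2_dx.
by apply/matrixP => i j; rewrite !mxE mulrA.
Qed.

End Consistency.

Section EnergyStability.
Context {R : realType} {nt nx pt : nat} {tn : 'I_nt.+1 -> R}.
Context {Ht Qt : 'M[R]_nt.+1} {Hx D : 'M[R]_nx.+1}.
Hypothesis sbp_t : is_SBP pt tn Ht Qt.
Hypothesis Hx_diag : Hx = diag_mx (\row_i Hx i i).
Hypothesis Hx_pos : forall i, 0 < Hx i i.
Hypothesis D_skew : D^T *m Hx = - (Hx *m D).
Context {a siga : R} {f : 'rV[R]_nx.+1} {rho : 'M[R]_(nt.+1, nx.+1)}.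
Hypotheses (a_ge0 : 0 <= a) (siga_ge0 : 0 <= siga).
Hypothesis rho_solves :
  DT Ht Qt rho = a *: (rho *m D^T *m D^T) - siga *: rho - SAT Ht rho f.

Local Notation tB := (e_first R nt).
Local Notation b := (tB^T *m rho).
Local Notation M := (rho *m Hx *m rho^T).
Local Notation form P X := (\tr (P *m X *m Hx *m X^T)).

Lemma Qt_mul_solution :
  Qt *m rho = a *: (Ht *m (rho *m D^T *m D^T)) - siga *: (Ht *m rho) - tB *m (b - f).
Proof.
have Ht_unit := sbp_norm_unit sbp_t.
have := congr1 (mulmx Ht) rho_solves.
rewrite /DT /Dop -(mulmxA (invmx Ht)) mulKVmx // => ->.
by rewrite /SAT !mulmxBr !mulKVmx // -!scalemxAr.
Qed.

Lemma mxtrace_Qt_energy :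
  \tr (Qt *m M) = - (a * form Ht (rho *m D^T)) - siga * form Ht rho
                  - \tr ((b - f) *m Hx *m b^T).
Proof.
have dissipation : \tr (Ht *m rho *m D^T *m D^T *m Hx *m rho^T) = - form Ht (rho *m D^T).
  rewrite trmx_mul trmxK !mulmxA -(mulmxA _ D^T Hx) D_skew mulmxN.
  by rewrite mulNmx raddfN !mulmxA.
have boundary_flux : \tr (tB *m (b - f) *m Hx *m rho^T) = \tr ((b - f) *m Hx *m b^T).
  by rewrite -!mulmxA mxtrace_mulC trmx_mul trmxK !mulmxA.
have -> : Qt *m M = a *: (Ht *m rho *m D^T *m D^T *m Hx *m rho^T)
    - siga *: (Ht *m rho *m Hx *m rho^T) - tB *m (b - f) *m Hx *m rho^T.
  by rewrite !mulmxA Qt_mul_solution !mulmxBl -!scalemxAl !mulmxA.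
by rewrite !(raddfB (@mxtrace _ _)) /= !mxtraceZ dissipation boundary_flux mulrN.
Qed.

Lemma solution_energy_bound : final_energy Hx rho <= data_energy Hx f.
Proof.
have [_ _ Ht_pos Qt_boundary _] := sbp_t.
have form_ge0 k (P : 'M[R]_k) (X : 'M[R]_(k, nx.+1)) :
    P = diag_mx (\row_i P i i) -> (forall i, 0 <= P i i) -> 0 <= form P X.
  move=> P_diag P_ge0; rewrite P_diag Hx_diag.
  by apply: mxtrace_diag_form_ge0 => i; rewrite mxE; [exact: P_ge0 | exact: ltW].
have Ht_ge0 i : 0 <= Ht i i by exact: ltW.
have dissipation_ge0 : 0 <= a * form Ht (rho *m D^T).
  by apply/mulr_ge0/form_ge0 => //; exact: sbp_normE sbp_t.
have absorption_ge0 : 0 <= siga * form Ht rho.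
  by apply/mulr_ge0/form_ge0 => //; exact: sbp_normE sbp_t.
have mismatch_ge0 : 0 <= form 1%:M (b - f).
  apply: form_ge0 => [|i]; last by rewrite mxE eqxx.
  by rewrite -diag_const_mx; congr diag_mx; apply/matrixP => i j; rewrite !mxE eqxx.
have Hx_sym : Hx^T = Hx by rewrite Hx_diag tr_diag_mx.
have cross_sym : \tr (b *m Hx *m f^T) = \tr (f *m Hx *m b^T).
  by rewrite -mxtrace_tr !trmx_mul trmxK Hx_sym mulmxA.
have M_sym : M^T = M by rewrite !trmx_mul trmxK Hx_sym mulmxA.
have := mxtrace_sbp_boundary Qt_boundary M_sym.
rewrite mxtrace_Qt_energy !mulmxBl (raddfB (@mxtrace _ _)) /= => balance.
move: mismatch_ge0; rewrite mul1mx linearB /= !mulmxBl !mulmxBr.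
rewrite !(raddfB (@mxtrace _ _)) /= cross_sym => mismatch_ge0.
rewrite /final_energy /data_energy -!trace_mx11.
move: balance mismatch_ge0 dissipation_ge0 absorption_ge0.
rewrite !(trmx_mul tB^T) trmxK !mulmxA mulr2n.
lra.
Qed.

End EnergyStability.

Theorem theorem3p5 (R : realType) (nt nx pt px nv : nat)
    (tn : 'I_nt.+1 -> R) (xn : 'I_nx.+1 -> R)
    (Ht Qt : 'M[R]_nt.+1) (Hx Qx : 'M[R]_nx.+1)
    (v w : 'I_nv -> R) (sigs siga : R) :
  is_SBP pt tn Ht Qt -> is_SBP px xn Hx Qx ->
  (forall k, 0 < w k) -> \sum_k w k = 1 -> \sum_k w k * v k = 0 ->
  0 < sigs -> 0 <= siga ->
  [/\
   (* (1) asymptotic limit eps -> 0 of the kinetic scheme is the limit scheme *)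
   (forall (f : 'rV[R]_nx.+1) (h : 'I_nv -> 'rV[R]_nx.+1)
      (rho : R -> 'M[R]_(nt.+1, nx.+1)) (g : R -> 'I_nv -> 'M[R]_(nt.+1, nx.+1))
      (rhoL : 'M[R]_(nt.+1, nx.+1)) (gL : 'I_nv -> 'M[R]_(nt.+1, nx.+1)),
      (forall eps, 0 < eps ->
         kinetic_scheme Ht Qt Hx Qx v w sigs siga eps f h (rho eps) (g eps)) ->
      (forall i j, rho e i j @[e --> (0:R)^'+] --> rhoL i j) ->
      (forall k i j, g e k i j @[e --> (0:R)^'+] --> gL k i j) ->
      limit_scheme Ht Qt Hx Qx v w sigs siga f rhoL),
   (* (2) consistency of the limit scheme with
          d_t rho = <v^2> d_x (1/sigs d_x rho) - siga rho  (periodic in x):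
          zero truncation error on periodic polynomial data *)
   (forall c : 'I_pt.+1 -> 'I_px.+1 -> R,
      (forall t, poly2 c t (xn ord0) = poly2 c t (xn ord_max)) ->
      (forall t, poly2_dx c t (xn ord0) = poly2_dx c t (xn ord_max)) ->
      let U := grid tn xn (poly2 c) in
      DT Ht Qt U - DXt Hx Qx ((avg_v2 v w / sigs) *: DXt Hx Qx U)
        + siga *: U + SAT Ht U (\row_j poly2 c (tn ord0) (xn j))
      = grid tn xn (fun t x => poly2_dt c t x
                     - avg_v2 v w * (sigs^-1 * poly2_dxx c t x)
                     + siga * poly2 c t x))
   &
   (* (3) energy stability of the limit scheme *)
   (forall (f : 'rV[R]_nx.+1) (rho : 'M[R]_(nt.+1, nx.+1)),
      limit_scheme Ht Qt Hx Qx v w sigs siga f rho ->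
      final_energy Hx rho <= data_energy Hx f)].
Proof.
move=> sbp_t sbp_x w_gt0 _ _ sigs_gt0 siga_ge0; split.
- move=> f h rho g rhoL gL scheme rho_cvg g_cvg.
  apply: (kinetic_scheme_limit sigs_gt0 scheme); first exact/cvg_mxP.
  by move=> k; apply/cvg_mxP; exact: g_cvg.
- by move=> c u_periodic ux_periodic; exact: limit_scheme_exact_poly2.
- move=> f rho; rewrite /limit_scheme DXtZ => rho_solves.
  have [_ _ Hx_pos _ _] := sbp_x.
  have avg_ge0 : 0 <= avg_v2 v w / sigs.
    apply/divr_ge0/ltW => //; apply: sumr_ge0 => k _.
    by apply/mulr_ge0/sqr_ge0; exact: ltW.
  exact: (solution_energy_bound sbp_t (sbp_normE sbp_x) Hx_pos
            (Dtil_bar_skew sbp_x) avg_ge0 siga_ge0 rho_solves).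
Qed.
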